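(* Let $3\le n\le k$ be integers and let $X$ be the discrete-time Markov chain on $\mathbb{N}^{n-1}$ described in the context. If $X$ is stable and $\mathbf{Q}$ is a random vector distributed according to its stationary distribution, then $$\mathbb{E}[|\mathbf{Q}|]=\frac{k(n-1)}{2(k-n)}.$$
   Context: $\mathbb{N}=\{0,1,2,\dots\}$; for $\mathbf{x}\in\mathbb{N}^{n-1}$, $|\mathbf{x}|=x_1+\dots+x_{n-1}$. $\mathbf{0}$, $\mathbf{1}$ are the all-zero and all-one vectors of dimension $n-1$, $\mathbf{e}_l$ the $l$-th unit vector. For $j=0,\dots,n-1$, $R_j$ is the set of $\mathbf{x}\in\mathbb{N}^{n-1}$ with exactly $j$ zero entries. $X$ is the Markov chain on $\mathbb{N}^{n-1}$ with nonzero transition probabilities: from $\mathbf{x}\in R_0$, to $\mathbf{x}-\mathbf{1}$ w.p. $\frac{k-(n-1)}{k}$ and to $\mathbf{x}+\mathbf{e}_l$ w.p. $\frac1k$ ($l=1,\dots,n-1$); from $\mathbf{x}\in R_j$, $1\le j\le n-2$, to $\mathbf{x}+\mathbf{e}_l$ w.p. $\frac{k-(n-1-j)}{kj}$ if $x_l=0$ and w.p. $\frac1k$ if $x_l\ge1$; from $\mathbf{0}$ to $\mathbf{e}_l$ w.p. $\frac1{n-1}$. Stable means positive recurrent. *)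

From mathcomp Require Import all_boot all_order all_algebra.
From mathcomp Require Import all_classical all_reals all_analysis.
Set Implicit Arguments. Unset Strict Implicit. Unset Printing Implicit Defensive.
Import Order.TTheory GRing.Theory Num.Theory.
Local Open Scope ring_scope.

Definition state (n : nat) := {ffun 'I_(n - 1) -> nat}.

Definition vnorm (n : nat) (x : state n) : nat := (\sum_(i < n - 1) x i)%N.

(* number of zero entries of x : x \in R_j iff nzeros x = j *)
Definition nzeros (n : nat) (x : state n) : nat := #|[set i | x i == 0%N]|.

Definition incr (n : nat) (x : state n) (l : 'I_(n - 1)) : state n :=
  [ffun i => (x i + (i == l))%N].

(* x - 1 (only used for x in R_0) *)
Definition decr (n : nat) (x : state n) : state n := [ffun i => (x i).-1].

Definition up_prob (R : realType) (n k : nat) (x : state n) (l : 'I_(n - 1)) : R :=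
  let j := nzeros x in
  if j == (n - 1)%N then 1 / (n - 1)%:R
  else if x l == 0%N then
    (k%:R - (n - 1 - j)%:R) / (k%:R * j%:R)           (* x in R_j, 1 <= j <= n-2, x_l = 0 *)
  else 1 / k%:R.

Definition down_prob (R : realType) (n k : nat) (x : state n) : R :=
  if nzeros x == 0%N then (k%:R - (n - 1)%:R) / k%:R else 0.

Definition P (R : realType) (n k : nat) (x y : state n) : R :=
  \sum_(l < n - 1) (if y == incr x l then up_prob R k x l else 0)
  + (if y == decr x then down_prob R k x else 0).

Local Open Scope ereal_scope.

(* taboo survival probabilities: surv m y = P_y(X_1 <> x, ..., X_m <> x) *)
Fixpoint surv (R : realType) (n k : nat) (x : state n) (m : nat) (y : state n)
  : \bar R :=
  match m with
  | 0%N => 1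
  | m'.+1 => \esum_(z in [set z : state n | z <> x]) ((P R k y z)%:E * surv R k x m' z)
  end.

(* expected return time E_x[T_x^+] = sum_{m>=0} P_x(T_x^+ > m) *)
Definition exp_return_time (R : realType) (n k : nat) (x : state n) : \bar R :=
  \sum_(0 <= m <oo) surv R k x m x.

Definition positive_recurrent_state (R : realType) (n k : nat) (x : state n) : Prop :=
  exp_return_time R k x < +oo.

Definition stable (R : realType) (n k : nat) : Prop :=
  forall x : state n, positive_recurrent_state R k x.

Definition stationary (R : realType) (n k : nat) (pi : state n -> R) : Prop :=
  [/\ forall x, (0 <= pi x)%R,
      \esum_(x in [set: state n]) (pi x)%:E = 1 &
      forall y, (pi y)%:E = \esum_(x in [set: state n]) (pi x * P R k x y)%:E].

Definition mean_norm (R : realType) (n : nat) (pi : state n -> R) : \bar R :=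
  \esum_(x in [set: state n]) (pi x * (vnorm x)%:R)%:E.

(* The Lyapunov function V(x) = n * sum_i x_i^2 - |x|^2 has one-step drift
   E[V(X_1) | X_0 = x] - V(x) = (n - 1) - c |x|  with  c = 2 (k - n) / k,
   so stationarity formally gives c E|Q| = n - 1.  As E[V(Q)] is not known to be
   finite, both inequalities are proved on the boxes {x : x_i <= N}: truncating V
   at a high level gives c E|Q| <= n - 1, while V restricted to a box bounds the
   stationary mass of the next shell from below, and if E|Q| < (n - 1) / c these
   bounds make the box means grow like the harmonic series.
   For k = n the right-hand side divides by 0 (which is 0 in Rocq), but then no
   stationary distribution exists: the drift of min(|x|, m) shows that pi
   vanishes on states with a zero coordinate, and induction on one coordinate
   along the down moves extends this to all states. *)

From mathcomp Require Import all_boot all_order all_algebra.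
From mathcomp Require Import all_classical all_reals all_analysis.
From mathcomp Require Import ring lra zify.
Set Implicit Arguments. Unset Strict Implicit. Unset Printing Implicit Defensive.
Import Order.TTheory GRing.Theory Num.Theory.
Local Open Scope ring_scope.

Lemma big_uniq_subset (T : eqType) (V : nmodType) (s t : seq T) (F : T -> V) :
  uniq s -> uniq t -> {subset s <= t} ->
  \sum_(x <- t) F x = \sum_(x <- s) F x + \sum_(x <- t | x \notin s) F x.
Proof.
move=> s_uniq t_uniq sub_st; rewrite (bigID (mem s)) /=; congr (_ + _).
rewrite -big_filter; apply/perm_big/uniq_perm; rewrite ?filter_uniq // => x.
by rewrite mem_filter andb_idr //; apply: sub_st.
Qed.

Lemma ler_sum_uniq_subset (T : eqType) (R : numDomainType) (s t : seq T)
    (F : T -> R) :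
  uniq s -> uniq t -> {subset s <= t} -> (forall x, 0 <= F x) ->
  \sum_(x <- s) F x <= \sum_(x <- t) F x.
Proof.
move=> s_uniq t_uniq sub_st F_ge0.
by rewrite (big_uniq_subset F s_uniq t_uniq sub_st) lerDl sumr_ge0.
Qed.

Lemma ler_sum_mem (T : eqType) (R : numDomainType) (t : seq T) (F : T -> R) x :
  uniq t -> x \in t -> (forall y, 0 <= F y) -> F x <= \sum_(y <- t) F y.
Proof.
move=> t_uniq xt F_ge0; have -> : F x = \sum_(y <- [:: x]) F y by rewrite big_seq1.
by apply: ler_sum_uniq_subset => // y; rewrite inE => /eqP ->.
Qed.

Lemma sqr_sum_le (R : realFieldType) (m : nat) (a : 'I_m -> R) :
  (\sum_(i < m) a i) ^+ 2 <= m%:R * \sum_(i < m) a i ^+ 2.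
Proof.
set S := \sum_(i < m) a i; set Q := \sum_(i < m) a i ^+ 2.
have row i : \sum_(j < m) (a i - a j) ^+ 2 = m%:R * a i ^+ 2 - a i * S *+ 2 + Q.
  under eq_bigr do rewrite sqrrB.
  by rewrite big_split sumrB /= sumr_const card_ord sumrMnl -mulr_sumr mulr_natl.
have : 0 <= \sum_(i < m) \sum_(j < m) (a i - a j) ^+ 2.
  by apply: sumr_ge0 => i _; apply: sumr_ge0 => j _; apply: sqr_ge0.
rewrite (eq_bigr _ (fun i _ => row i)) big_split sumrB /= -mulr_sumr sumrMnl.
rewrite -mulr_suml sumr_const card_ord -/S -/Q.
rewrite -[Q *+ m]mulr_natl -[_ *+ 2]mulr_natl expr2; lra.
Qed.

Lemma harmonic_tail_unbounded (R : realType) (J : nat) (b : R) :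
  exists2 M, (J <= M)%N & b < \sum_(J <= i < M) harmonic i.
Proof.
have series_nd : nondecreasing_seq (series (@harmonic R)).
  by apply: (@nondecreasing_series _ _ xpredT 0) => i _ _; apply: harmonic_ge0.
have /cvgryPgt/(_ (b + series harmonic J)) [M _ M_big] :=
  nondecreasing_dvgn_lt series_nd (@dvg_harmonic R).
exists (maxn J M); first exact: leq_maxl.
by rewrite -sub_series_geq ?leq_maxl // ltrBrDr; apply: M_big; apply: leq_maxr.
Qed.

Section Boxes.
Variable n : nat.

Definition in_box (N : nat) (x : state n) : bool := [forall i, x i <= N]%N.

Definition box (N : nat) : seq (state n) :=
  [seq [ffun i => nat_of_ord (z i)] | z : {ffun 'I_(n - 1) -> 'I_N.+1}].

Lemma mem_box N x : (x \in box N) = in_box N x.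
Proof.
apply/mapP/forallP => [[z _ ->] i | x_le]; first by rewrite ffunE -ltnS.
exists [ffun i => inord (x i)]; first by rewrite mem_enum.
by apply/ffunP => i; rewrite !ffunE inordK // ltnS.
Qed.

Lemma box_uniq N : uniq (box N).
Proof.
rewrite map_inj_uniq ?enum_uniq // => z1 z2 /ffunP z12; apply/ffunP => i.
by apply: val_inj; have := z12 i; rewrite !ffunE.
Qed.

Lemma in_boxW N M x : (N <= M)%N -> in_box N x -> in_box M x.
Proof. by move=> NM /forallP x_le; apply/forallP => i; apply: leq_trans NM. Qed.

Lemma box_subset N M : (N <= M)%N -> {subset box N <= box M}.
Proof. by move=> NM x; rewrite !mem_box; apply: in_boxW. Qed.

Lemma not_in_boxP N x : ~~ in_box N x -> exists i, (N < x i)%N.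
Proof. by rewrite negb_forall => /existsP[i]; rewrite -ltnNge; exists i. Qed.

Lemma seq_in_some_box (s : seq (state n)) : exists N, {subset s <= box N}.
Proof.
exists (\max_(x <- s) \max_(i < n - 1) x i)%N => x xs; rewrite mem_box.
apply/forallP => i; apply: leq_trans (leq_bigmax (F := x) i) _.
by rewrite (big_rem x xs) /= leq_maxl.
Qed.

Lemma ler_sum_box (R : numDomainType) N M (F : state n -> R) :
  (N <= M)%N -> (forall x, 0 <= F x) ->
  \sum_(x <- box N) F x <= \sum_(x <- box M) F x.
Proof.
by move=> NM; apply: ler_sum_uniq_subset (box_uniq N) (box_uniq M) (box_subset NM).
Qed.

Lemma big_box_split (V : nmodType) N M (F : state n -> V) : (N <= M)%N ->
  \sum_(x <- box M) F x
  = \sum_(x <- box N) F x + \sum_(x <- box M | ~~ in_box N x) F x.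
Proof.
move=> NM; rewrite (big_uniq_subset F (box_uniq N) (box_uniq M) (box_subset NM)).
by congr (_ + _); apply: eq_bigl => x; rewrite mem_box.
Qed.

Lemma in_box_incr N x l : in_box N x -> in_box N.+1 (incr x l).
Proof.
move=> /forallP x_le; apply/forallP => i; rewrite ffunE.
by have := x_le i; case: (i == l) => /=; lia.
Qed.

Lemma in_box_decr N x : in_box N x -> in_box N (decr x).
Proof.
by move=> /forallP x_le; apply/forallP => i; rewrite ffunE; have := x_le i; lia.
Qed.

End Boxes.

Section ESum.
Variables (R : realType) (T : choiceType).
Local Open Scope ereal_scope.

Lemma esum_ge_sum_seq (F : T -> R) (s : seq T) :
  uniq s -> (\sum_(x <- s) F x)%:E <= \esum_(x in [set: T]) (F x)%:E.
Proof.
move=> s_uniq; apply: esum_ge; exists [set` s]%classic.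
  by split; [exact: finite_seq |].
by rewrite -fsbig_seq // sumEFin.
Qed.

Lemma esum_le_sum_seq (F : T -> R) (v : \bar R) :
  (forall s : seq T, uniq s -> (\sum_(x <- s) F x)%:E <= v) ->
  \esum_(x in [set: T]) (F x)%:E <= v.
Proof.
move=> le_v; apply: ge_ereal_sup => _ [X [X_fin _] <-].
by rewrite fsbig_finite // sumEFin; apply/le_v/finmap.fset_uniq.
Qed.

Lemma esum_sum_seq (F : T -> R) (s : seq T) :
  uniq s -> (forall x, 0 <= F x)%R -> (forall x, x \notin s -> F x = 0%R) ->
  \esum_(x in [set: T]) (F x)%:E = (\sum_(x <- s) F x)%:E.
Proof.
move=> s_uniq F_ge0 F_out; apply/le_anti; rewrite esum_ge_sum_seq // andbT.
apply: esum_le_sum_seq => r r_uniq; rewrite lee_fin (bigID (mem s)) /=.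
rewrite [X in (_ + X)%R]big1 ?addr0 => [|x /F_out //].
rewrite -big_filter; apply: ler_sum_uniq_subset; rewrite ?filter_uniq // => x.
by rewrite mem_filter => /andP[].
Qed.

End ESum.

Lemma esum_le_box (R : realType) (n : nat) (F : state n -> R) (v : \bar R) :
  (forall x, 0 <= F x) ->
  (forall N, ((\sum_(x <- box n N) F x)%:E <= v)%E) ->
  (\esum_(x in [set: state n]) (F x)%:E <= v)%E.
Proof.
move=> F_ge0 le_v; apply: esum_le_sum_seq => s s_uniq.
have [N sN] := seq_in_some_box s; apply: le_trans (le_v N); rewrite lee_fin.
exact: ler_sum_uniq_subset (box_uniq n N) sN F_ge0.
Qed.

Definition sqnorm (R : realType) (n : nat) (x : state n) : R :=
  \sum_(i < n - 1) (x i)%:R ^+ 2.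

Definition lyap (R : realType) (n : nat) (x : state n) : R :=
  n%:R * sqnorm R x - (vnorm x)%:R ^+ 2.

Definition step_mean (R : realType) (n k : nat) (f : state n -> R) (x : state n) : R :=
  \sum_(l < n - 1) up_prob R k x l * f (incr x l) + down_prob R k x * f (decr x).

Definition drift_rate (R : realType) (n k : nat) : R := 2 * (k%:R - n%:R) / k%:R.

Lemma drift_rate_ge0 (R : realType) (n k : nat) : (n <= k)%N -> 0 <= drift_rate R n k.
Proof. by move=> n_le_k; rewrite !mulr_ge0 ?invr_ge0 // subr_ge0 ler_nat. Qed.

Lemma drift_rate_gt0 (R : realType) (n k : nat) : (n < k)%N -> 0 < drift_rate R n k.
Proof.
move=> n_lt_k; rewrite !mulr_gt0 ?invr_gt0 ?subr_gt0 ?ltr_nat ?ltr0n //.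
exact: leq_trans n_lt_k.
Qed.

Section StateFunctions.
Variables (R : realType) (n : nat).
Implicit Types (x : state n) (N : nat).

Lemma natr_vnorm x : (vnorm x)%:R = \sum_(i < n - 1) (x i)%:R :> R.
Proof. exact: natr_sum. Qed.

Lemma vnorm_incr x l : vnorm (incr x l) = (vnorm x).+1.
Proof.
rewrite /vnorm (eq_bigr (fun i => x i + (i == l))%N) => [|i _]; last by rewrite ffunE.
rewrite big_split /= -[RHS]addn1; congr addn.
by rewrite (bigD1 l) //= eqxx big1 // => i /negbTE ->.
Qed.

Lemma coord_le_vnorm x i : (x i <= vnorm x)%N.
Proof. by rewrite /vnorm (bigD1 i) //= leq_addr. Qed.

Lemma vnorm_box N x : in_box N x -> (vnorm x <= (n - 1) * N)%N.
Proof.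
move=> /forallP x_le; apply: leq_trans (_ : \sum_(i < n - 1) N <= _)%N.
  exact: leq_sum.
by rewrite sum_nat_const card_ord.
Qed.

Lemma sqnorm_ge0 x : 0 <= sqnorm R x.
Proof. by apply: sumr_ge0 => i _; apply: sqr_ge0. Qed.

Lemma coord_le_sqnorm x i : (x i)%:R <= sqnorm R x.
Proof.
apply: le_trans (_ : (x i)%:R ^+ 2 <= _); last first.
  apply: (ler_sum_mem (index_enum_uniq _)) => [|j]; first exact: mem_index_enum.
  exact: sqr_ge0.
by rewrite -natrX ler_nat; case: (x i) => // m; rewrite expnS leq_pmulr.
Qed.

Lemma sqnorm_box N x : in_box N x -> sqnorm R x <= (n - 1)%:R * N%:R ^+ 2.
Proof.
move=> /forallP x_le; apply: le_trans (_ : \sum_(i < n - 1) N%:R ^+ 2 <= _).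
  by apply: ler_sum => i _; rewrite -!natrX ler_nat leq_exp2r.
by rewrite sumr_const card_ord mulr_natl.
Qed.

Lemma sqnorm_incr x l : sqnorm R (incr x l) = sqnorm R x + 2 * (x l)%:R + 1.
Proof.
rewrite /sqnorm (bigD1 l) //= [in RHS](bigD1 l) //= ffunE eqxx natrD.
rewrite (eq_bigr (fun i => (x i)%:R ^+ 2)) => [|i /negbTE il]; last first.
  by rewrite ffunE il addn0.
by rewrite /=; ring.
Qed.

Lemma nzeros_le x : (nzeros x <= n - 1)%N.
Proof. by rewrite /nzeros (leq_trans (max_card _)) ?card_ord. Qed.

Lemma nzeros_eq0 x i : nzeros x = 0%N -> x i != 0%N.
Proof. by move=> /cards0_eq /setP/(_ i); rewrite !inE => ->. Qed.

Lemma nzeros_full x i : nzeros x = (n - 1)%N -> x i = 0%N.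
Proof.
move=> x_full; suff : i \in [set i | x i == 0%N] by rewrite inE => /eqP.
have /eqP -> : [set i | x i == 0%N] == [set: 'I_(n - 1)].
  by rewrite eqEcard finset.subsetT finset.cardsT card_ord /=; apply/eq_leq/esym.
by rewrite finset.in_setT.
Qed.

Lemma sum_if_coord_eq0 x (a b : R) :
  \sum_(l < n - 1) (if x l == 0%N then a else b)
  = (nzeros x)%:R * a + (n - 1 - nzeros x)%:R * b.
Proof.
have card_zero : #|[pred i | x i == 0%N]| = nzeros x by rewrite /nzeros cardsE.
have card_pos : #|[pred i | x i != 0%N]| = (n - 1 - nzeros x)%N.
  apply: (@addnI (nzeros x)); rewrite subnKC ?nzeros_le // -card_zero.
  by rewrite -[X in _ = X](card_ord (n - 1)) -(cardC [pred i | x i == 0%N]).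
rewrite (bigID (fun l => x l == 0%N)) /=.
rewrite (eq_bigr (fun _ => a)) => [|l ->] //.
rewrite [X in _ + X](eq_bigr (fun _ => b)) => [|l /negbTE ->] //.
by rewrite !sumr_const card_zero card_pos !mulr_natl.
Qed.

Lemma natr_decr x i : nzeros x = 0%N -> (decr x i)%:R = (x i)%:R - 1 :> R.
Proof. by move=> /(nzeros_eq0 i) x_neq0; rewrite ffunE -subn1 natrB // lt0n. Qed.

Lemma vnorm_decr x : nzeros x = 0%N -> vnorm x = (vnorm (decr x) + (n - 1))%N.
Proof.
move=> x_pos; rewrite /vnorm (eq_bigr (fun i => decr x i + 1)%N) => [|i _].
  by rewrite big_split /= sum_nat_const card_ord muln1.
by rewrite ffunE addn1 prednK // lt0n nzeros_eq0.
Qed.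

Lemma sqnorm_decr x : nzeros x = 0%N ->
  sqnorm R (decr x) = sqnorm R x - 2 * (vnorm x)%:R + (n - 1)%:R.
Proof.
move=> x_pos; rewrite /sqnorm natr_vnorm mulr_sumr -sumrB.
rewrite (eq_bigr (fun i => (x i)%:R ^+ 2 - 2 * (x i)%:R + 1)) => [|i _]; last first.
  by rewrite natr_decr //; ring.
by rewrite big_split /= sumr_const card_ord.
Qed.

Lemma lyap_incr x l :
  lyap R (incr x l) = lyap R x + 2 * n%:R * (x l)%:R + n%:R - 2 * (vnorm x)%:R - 1.
Proof. by rewrite /lyap sqnorm_incr vnorm_incr -addn1 natrD; ring. Qed.

Lemma lyap_decr x : (0 < n)%N -> nzeros x = 0%N ->
  lyap R (decr x) = lyap R x + (n - 1)%:R - 2 * (vnorm x)%:R.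
Proof.
move=> n_gt0 x_pos; have n1 : n%:R = (n - 1)%:R + 1 :> R by rewrite natrB // subrK.
by rewrite /lyap sqnorm_decr // (vnorm_decr x_pos) natrD n1; ring.
Qed.

Lemma sqnorm_le_lyap x : (0 < n)%N -> sqnorm R x <= lyap R x.
Proof.
move=> n_gt0; have := sqr_sum_le (fun i => (x i)%:R : R); rewrite -natr_vnorm.
rewrite /lyap -/(sqnorm R x) natrB // lerBrDl mulrBl mul1r; lra.
Qed.

Lemma lyap_ge0 x : (0 < n)%N -> 0 <= lyap R x.
Proof. by move=> n_gt0; apply: le_trans (sqnorm_ge0 x) (sqnorm_le_lyap x n_gt0). Qed.

Lemma lyap_box N x : in_box N x -> lyap R x <= n%:R * ((n - 1)%:R * N%:R ^+ 2).
Proof.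
move=> xN; apply: le_trans (_ : _ <= n%:R * sqnorm R x) _.
  by rewrite /lyap lerBlDr lerDl sqr_ge0.
by rewrite ler_wpM2l // sqnorm_box.
Qed.

End StateFunctions.

Section Chain.
Variables (R : realType) (n k : nat).
Hypotheses (n_gt1 : (1 < n)%N) (n_le_k : (n <= k)%N).
Implicit Types (x y : state n) (f g : state n -> R).

Let k_neq0 : k%:R != 0 :> R.
Proof. by rewrite pnatr_eq0 -lt0n; apply: leq_trans n_le_k; apply: ltnW. Qed.

Lemma up_prob_ge0 x l : 0 <= up_prob R k x l.
Proof.
rewrite /up_prob; case: ifP => _; first exact: divr_ge0.
case: ifP => _; last exact: divr_ge0.
by rewrite divr_ge0 ?mulr_ge0 // subr_ge0 ler_nat; lia.
Qed.

Lemma down_prob_ge0 x : 0 <= down_prob R k x.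
Proof.
by rewrite /down_prob; case: ifP => // _; rewrite divr_ge0 // subr_ge0 ler_nat; lia.
Qed.

Lemma down_prob_gt0 x : nzeros x = 0%N -> 0 < down_prob R k x.
Proof.
move=> x_pos; rewrite /down_prob x_pos eqxx divr_gt0 // ?subr_gt0 ?ltr_nat ?ltr0n; lia.
Qed.

Lemma down_prob_eq0 x : nzeros x != 0%N -> down_prob R k x = 0.
Proof. by rewrite /down_prob => /negbTE ->. Qed.

Lemma up_prob_pos x l : nzeros x = 0%N -> up_prob R k x l = k%:R^-1.
Proof.
move=> x_pos; rewrite /up_prob x_pos (negbTE (nzeros_eq0 l x_pos)) ifN_eq ?div1r //.
lia.
Qed.

Lemma up_prob_coord x l : up_prob R k x l * (x l)%:R = (x l)%:R / k%:R.
Proof.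
rewrite /up_prob; have [->|xl_neq0] := eqVneq (x l) 0%N; first by rewrite !mulr0 mul0r.
by case: eqP => [/(nzeros_full l)/eqP | _]; rewrite ?(negbTE xl_neq0) // mul1r mulrC.
Qed.

Lemma sum_up_down_prob x : \sum_(l < n - 1) up_prob R k x l + down_prob R k x = 1.
Proof.
have n1_neq0 : (n - 1)%:R != 0 :> R by rewrite pnatr_eq0; lia.
have [x_pos | x_zero] := eqVneq (nzeros x) 0%N.
  rewrite (eq_bigr _ (fun l _ => up_prob_pos l x_pos)) sumr_const card_ord.
  by rewrite /down_prob x_pos eqxx -mulr_natl; field.
rewrite down_prob_eq0 // addr0 /up_prob.
have [x_full | x_mixed] := eqVneq (nzeros x) (n - 1)%N.
  by rewrite sumr_const card_ord -mulr_natl; field.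
rewrite sum_if_coord_eq0 natrB ?nzeros_le //.
by field; rewrite k_neq0 pnatr_eq0 x_zero.
Qed.

Lemma P_ge0 x y : 0 <= P R k x y.
Proof.
rewrite /P addr_ge0 //; last by case: ifP => // _; apply: down_prob_ge0.
by apply: sumr_ge0 => l _; case: ifP => // _; apply: up_prob_ge0.
Qed.

Lemma step_mean_const (c : R) x : step_mean k (fun=> c) x = c.
Proof. by rewrite /step_mean -mulr_suml -mulrDl sum_up_down_prob mul1r. Qed.

Lemma step_mean_subr f (c : R) x :
  step_mean k (fun y => f y - c) x = step_mean k f x - c.
Proof.
rewrite -[in RHS](step_mean_const c x) /step_mean.
by under eq_bigr do rewrite mulrBr; rewrite sumrB mulrBr; ring.
Qed.

Lemma ler_step_mean f g x : (forall y, f y <= g y) -> step_mean k f x <= step_mean k g x.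
Proof.
move=> le_fg; rewrite lerD ?ler_wpM2l ?down_prob_ge0 //.
by apply: ler_sum => l _; rewrite ler_wpM2l ?up_prob_ge0.
Qed.

Lemma step_mean_ge0 f x : (forall y, 0 <= f y) -> 0 <= step_mean k f x.
Proof. by move=> f_ge0; rewrite -(step_mean_const 0 x); apply: ler_step_mean. Qed.

Lemma step_mean_lyap x :
  step_mean k (@lyap R n) x = lyap R x + (n - 1)%:R - drift_rate R n k * (vnorm x)%:R.
Proof.
have n1 : n%:R = (n - 1)%:R + 1 :> R by rewrite natrB 1?ltnW // subrK.
set base := lyap R x + (n - 1)%:R - 2 * (vnorm x)%:R.
have down_move : down_prob R k x * lyap R (decr x) = down_prob R k x * base.
  have [x_pos | x_zero] := eqVneq (nzeros x) 0%N; first by rewrite lyap_decr // ltnW.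
  by rewrite down_prob_eq0 // !mul0r.
rewrite /step_mean down_move.
rewrite (eq_bigr (fun l => up_prob R k x l * base
                           + 2 * n%:R * (up_prob R k x l * (x l)%:R))) => [|l _].
  rewrite big_split /= -mulr_suml -mulr_sumr.
  rewrite (eq_bigr _ (fun l _ => up_prob_coord x l)) -mulr_suml -natr_vnorm.
  have -> : \sum_(l < n - 1) up_prob R k x l = 1 - down_prob R k x.
    by rewrite -(sum_up_down_prob x) addrK.
  by rewrite /base /drift_rate n1; field.
by rewrite lyap_incr /base n1; ring.
Qed.

Lemma step_mean_vnorm (G : nat -> R) x :
  step_mean k (fun y => G (vnorm y)) x
  = (1 - down_prob R k x) * G (vnorm x).+1 + down_prob R k x * G (vnorm (decr x)).
Proof.
rewrite /step_mean -(sum_up_down_prob x) addrK mulr_suml.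
by congr (_ + _); apply: eq_bigr => l _; rewrite vnorm_incr.
Qed.

Lemma down_prob_le_P x : down_prob R k x <= P R k x (decr x).
Proof.
rewrite /P eqxx lerDr sumr_ge0 // => l _.
by case: ifP => // _; apply: up_prob_ge0.
Qed.

End Chain.

Lemma P_out_box (R : realType) (n k N : nat) (x y : state n) :
  in_box N y -> ~~ in_box N.+1 x -> P R k x y = 0.
Proof.
move=> /forallP y_le /not_in_boxP[i xi].
rewrite /P big1 ?add0r => [|l _]; case: eqP => // y_eq.
  by have := y_le i; rewrite y_eq ffunE; lia.
by have := y_le i; rewrite y_eq ffunE; lia.
Qed.

Definition box_mass (R : realType) (n : nat) (pi : state n -> R) (N : nat) : R :=
  \sum_(x <- box n N) pi x.

Definition box_mean (R : realType) (n : nat) (pi : state n -> R) (N : nat) : R :=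
  \sum_(x <- box n N) pi x * (vnorm x)%:R.

Section Stationary.
Variables (R : realType) (n k : nat) (pi : state n -> R).
Hypotheses (n_gt1 : (1 < n)%N) (n_le_k : (n <= k)%N) (pi_stat : stationary k pi).
Implicit Types (x y : state n) (f h : state n -> R).

Let pi_ge0 x : 0 <= pi x. Proof. by case: pi_stat. Qed.

Lemma stationary_box N y :
  in_box N y -> pi y = \sum_(x <- box n N.+1) pi x * P R k x y.
Proof.
case: pi_stat => _ _ pi_eq yN; apply/EFin_inj; rewrite pi_eq.
apply: esum_sum_seq (box_uniq n N.+1) _ _ => x.
  by rewrite mulr_ge0 ?P_ge0.
by rewrite mem_box => xN; rewrite (P_out_box _ _ yN xN) mulr0.
Qed.

Lemma sum_step_mean_box N f : (forall y, ~~ in_box N y -> f y = 0) ->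
  \sum_(y <- box n N) pi y * f y = \sum_(x <- box n N.+1) pi x * step_mean k f x.
Proof.
move=> f_out.
have pick (z : state n) (c : R) :
    \sum_(y <- box n N) (if y == z then c else 0) * f y = c * f z.
  have [zN | zN] := boolP (z \in box n N).
    rewrite (bigD1_seq z) ?box_uniq //= eqxx big1 ?addr0 // => y /negbTE ->.
    by rewrite mul0r.
  rewrite big1_seq ?f_out -?mem_box ?mulr0 // => y /andP[_ yN].
  by rewrite ifN ?mul0r //; apply: contraNneq zN => <-.
rewrite big_seq (eq_bigr (fun y => \sum_(x <- box n N.+1) pi x * P R k x y * f y));
  last by move=> y; rewrite mem_box => yN; rewrite (stationary_box yN) mulr_suml.
rewrite -big_seq exchange_big /=; apply: eq_bigr => x _.
rewrite /step_mean /P mulrDr; under eq_bigr do rewrite -mulrA mulrDl mulr_suml.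
rewrite -mulr_sumr big_split exchange_big /= pick -mulrDr.
by congr (_ * (_ + _)); apply: eq_bigr => l _; rewrite pick.
Qed.

Lemma sum_drift_box N f : (forall y, ~~ in_box N y -> f y = 0) ->
  \sum_(x <- box n N.+1) pi x * (step_mean k f x - f x) = 0.
Proof.
move=> f_out; under eq_bigr do rewrite mulrBr.
rewrite sumrB -sum_step_mean_box // (big_box_split _ (leqnSn N)).
by rewrite [X in _ - (_ + X)]big1 ?addr0 ?subrr // => x /f_out ->; rewrite mulr0.
Qed.

Lemma box_mass_le1 N : box_mass pi N <= 1.
Proof.
case: pi_stat => _ pi_sum1 _; rewrite -lee_fin -pi_sum1.
exact: esum_ge_sum_seq (box_uniq n N).
Qed.

Lemma exists_box_mass_gt (e : R) : 0 < e -> exists N, 1 - e < box_mass pi N.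
Proof.
move=> e_gt0; apply/not_existsP => small; case: pi_stat => _ pi_sum1 _.
suff : (\esum_(x in [set: state n]) (pi x)%:E <= (1 - e)%:E)%E.
  by rewrite pi_sum1 lee_fin; lra.
apply: esum_le_box => // N; rewrite lee_fin leNgt; apply/negP; exact: small.
Qed.

Lemma drift_sum_ge0 N f h : (forall y, ~~ in_box N y -> f y = 0) ->
  (forall x, step_mean k f x - f x <= h x) ->
  0 <= \sum_(x <- box n N.+1) pi x * h x.
Proof.
move=> f_out le_h; rewrite -[leLHS](sum_drift_box f_out).
by apply: ler_sum => x _; rewrite ler_wpM2l.
Qed.

Lemma drift_sum_le0 N f h : (forall y, ~~ in_box N y -> f y = 0) ->
  (forall x, h x <= step_mean k f x - f x) ->
  \sum_(x <- box n N.+1) pi x * h x <= 0.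
Proof.
move=> f_out ge_h; rewrite -[leRHS](sum_drift_box f_out).
by apply: ler_sum => x _; rewrite ler_wpM2l.
Qed.

Lemma drift_rate_box_mean_le N : drift_rate R n k * box_mean pi N <= (n - 1)%:R.
Proof.
set c := drift_rate R n k; set d : R := (n - 1)%:R.
have c_ge0 : 0 <= c := drift_rate_ge0 R n_le_k.
pose K := (n * ((n - 1) * N ^ 2)).+1.
pose low x := lyap R x < K%:R.
pose f y := Num.min (lyap R y) K%:R - K%:R.
have f_out y : ~~ in_box K y -> f y = 0.
  move=> /not_in_boxP[i yi]; apply/eqP; rewrite subr_eq0; apply/eqP/min_idPr.
  apply: le_trans (sqnorm_le_lyap _ _ (ltnW n_gt1)).
  by apply: le_trans (coord_le_sqnorm _ y i); rewrite ler_nat ltnW.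
have drift x : step_mean k f x - f x <= (low x)%:R * (d - c * (vnorm x)%:R).
  rewrite /f step_mean_subr // opprB addrA subrK /low.
  have [lowx | highx] := ltP (lyap R x) K%:R.
    have : step_mean k (fun y => Num.min (lyap R y) K%:R) x <= step_mean k (@lyap R n) x.
      by apply: ler_step_mean => // y; rewrite ge_min lexx.
    by rewrite mul1r step_mean_lyap // -/c -/d; lra.
  rewrite mul0r subr_le0 -[leRHS](step_mean_const n_gt1 n_le_k _ x).
  by apply: ler_step_mean => // y; rewrite ge_min lexx orbT.
have := drift_sum_ge0 f_out drift.
rewrite (eq_bigr (fun x => d * ((low x)%:R * pi x)
                           - c * ((low x)%:R * (pi x * (vnorm x)%:R)))) => [|x _];
  last by ring.
rewrite sumrB -!mulr_sumr subr_ge0 => mean_low.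
have le_mass : \sum_(x <- box n K.+1) (low x)%:R * pi x <= 1.
  apply: le_trans (box_mass_le1 K.+1); apply: ler_sum => x _.
  by rewrite ler_piMl //; case: (low x).
have le_mean : box_mean pi N <= \sum_(x <- box n K.+1) (low x)%:R * (pi x * (vnorm x)%:R).
  apply: le_trans (_ : \sum_(x <- box n N) (low x)%:R * (pi x * (vnorm x)%:R) <= _).
    rewrite /box_mean big_seq [leRHS]big_seq; apply: ler_sum => x; rewrite mem_box => xN.
    rewrite /low (le_lt_trans (lyap_box _ xN)) ?mul1r //.
    by rewrite -!natrX -!natrM ltr_nat.
  apply: ler_sum_box => [|x]; last by rewrite !mulr_ge0.
  by rewrite /K; nia.
apply: le_trans (ler_wpM2l c_ge0 le_mean) _; apply: le_trans mean_low _.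
by rewrite -[leRHS]mulr1 ler_wpM2l.
Qed.

Lemma box_mass_shell m :
  box_mass pi m.+1 - box_mass pi m = \sum_(x <- box n m.+1 | ~~ in_box m x) pi x.
Proof. by rewrite /box_mass (big_box_split _ (leqnSn m)) addrAC subrr add0r. Qed.

Lemma box_mean_shell m :
  box_mean pi m + m.+1%:R * (box_mass pi m.+1 - box_mass pi m) <= box_mean pi m.+1.
Proof.
rewrite /box_mean (big_box_split _ (leqnSn m)) lerD2l box_mass_shell mulr_sumr.
apply: ler_sum => x /not_in_boxP[i xi]; rewrite mulrC ler_wpM2l // ler_nat.
exact: leq_trans (coord_le_vnorm x i).
Qed.

Lemma box_mass_shell_ge m :
  (n - 1)%:R * box_mass pi m - drift_rate R n k * box_mean pi m
  <= n%:R * ((n - 1)%:R * m.+1%:R ^+ 2) * (box_mass pi m.+1 - box_mass pi m).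
Proof.
set B := n%:R * _.
pose f y := if in_box m.+1 y then lyap R y else 0.
have f_out y : ~~ in_box m.+1 y -> f y = 0 by rewrite /f => /negbTE ->.
have f_ge0 y : 0 <= f y by rewrite /f; case: ifP => // _; rewrite lyap_ge0 // ltnW.
have f_box x : in_box m x -> step_mean k f x = step_mean k (@lyap R n) x.
  move=> xm; rewrite /step_mean /f (in_boxW (leqnSn m) (in_box_decr xm)).
  by congr (_ + _); apply: eq_bigr => l _; rewrite in_box_incr.
have inner : \sum_(x <- box n m) pi x * step_mean k f x
    = \sum_(x <- box n m) pi x * lyap R x
      + (n - 1)%:R * box_mass pi m - drift_rate R n k * box_mean pi m.
  rewrite /box_mass /box_mean !mulr_sumr -big_split -sumrB /= big_seq [RHS]big_seq.
  apply: eq_bigr => x; rewrite mem_box => xm.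
  by rewrite f_box // step_mean_lyap //; ring.
have outer : \sum_(x <- box n m.+1) pi x * f x
    <= \sum_(x <- box n m) pi x * lyap R x + B * (box_mass pi m.+1 - box_mass pi m).
  rewrite (big_box_split _ (leqnSn m)) lerD //.
    rewrite big_seq [leRHS]big_seq; apply: ler_sum => x; rewrite mem_box => xm.
    by rewrite /f (in_boxW (leqnSn m) xm).
  rewrite box_mass_shell mulr_sumr big_seq_cond [leRHS]big_seq_cond.
  apply: ler_sum => x /andP[]; rewrite mem_box => xm _.
  by rewrite mulrC ler_wpM2r // /f xm lyap_box.
have := sum_step_mean_box f_out.
have : \sum_(x <- box n m) pi x * step_mean k f x
       <= \sum_(x <- box n m.+2) pi x * step_mean k f x.
  apply: ler_sum_box => [|x]; first exact/leqW/leqnSn.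
  by rewrite mulr_ge0 // step_mean_ge0.
rewrite inner => lower balance; rewrite -balance in lower; lra.
Qed.

Lemma exists_box_mean_gt e : (n < k)%N ->
  e < (n - 1)%:R / drift_rate R n k -> exists N, e < box_mean pi N.
Proof.
move=> n_lt_k e_lt; apply/not_existsP => small.
have {}small N : box_mean pi N <= e by rewrite leNgt; apply/negP/small.
set c := drift_rate R n k in e_lt; set d : R := (n - 1)%:R in e_lt.
have c_gt0 : 0 < c := drift_rate_gt0 R n_lt_k.
have d_gt0 : 0 < d by rewrite ltr0n subn_gt0.
set delta := d - c * e.
have delta_gt0 : 0 < delta by rewrite subr_gt0 -ltr_pdivlMl // mulrC.
have [J massJ] := exists_box_mass_gt (divr_gt0 delta_gt0 (mulr_gt0 (ltr0n _ 2) d_gt0)).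
set eps := delta / (2 * (n%:R * d)).
have eps_gt0 : 0 < eps by rewrite divr_gt0 ?mulr_gt0 ?ltr0n //; lia.
(* Past J the boxes carry mass > 1 - delta / (2 d), so box_mass_shell_ge puts
   mass >= eps / (m + 1)^2 on the m-th shell, whose states have norm > m. *)
have step m : (J <= m)%N -> box_mean pi m + eps * harmonic m <= box_mean pi m.+1.
  move=> Jm; apply: le_trans (box_mean_shell m); rewrite lerD2l.
  set D := box_mass pi m.+1 - box_mass pi m.
  have mass_m : d - delta / 2 < d * box_mass pi m.
    have -> : d - delta / 2 = d * (1 - delta / (2 * d)) by field; rewrite gt_eqF.
    by rewrite ltr_pM2l // (lt_le_trans massJ) // ler_sum_box.
  have mean_m : c * box_mean pi m <= c * e by rewrite ler_pM2l.
  have key : delta / 2 <= n%:R * ((n - 1)%:R * m.+1%:R ^+ 2) * D.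
    apply: le_trans (box_mass_shell_ge m); rewrite -/c -/d.
    by move: mass_m mean_m; rewrite /delta; lra.
  have ndm_gt0 : 0 < n%:R * d * m.+1%:R by rewrite !mulr_gt0 // ltr0n; lia.
  rewrite -(ler_pM2l ndm_gt0).
  have -> : n%:R * d * m.+1%:R * (m.+1%:R * D) = n%:R * (d * m.+1%:R ^+ 2) * D by ring.
  have -> : n%:R * d * m.+1%:R * (eps * harmonic m) = delta / 2.
    by rewrite /eps /harmonic /=; field; rewrite !gt_eqF // ?mulr_gt0 // ltr0n; lia.
  exact: key.
have grow i : eps * \sum_(J <= m < J + i) harmonic m <= box_mean pi (J + i).
  elim: i => [|i IH].
    by rewrite addn0 big_geq // mulr0 sumr_ge0 // => x _; rewrite mulr_ge0.
  rewrite addnS big_nat_recr ?leq_addr //= mulrDr.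
  by apply: le_trans (step _ (leq_addr _ _)); rewrite lerD2r.
have [M JM big] := harmonic_tail_unbounded J (e / eps).
have := le_trans (grow (M - J)%N) (small _); rewrite subnKC // => bounded.
by move: big; rewrite ltr_pdivrMr // mulrC ltNge bounded.
Qed.

End Stationary.

Section Critical.
Variables (R : realType) (n : nat) (pi : state n -> R).
Hypotheses (n_gt1 : (1 < n)%N) (pi_stat : stationary n pi).
Implicit Types (x y : state n).

Let pi_ge0 x : 0 <= pi x. Proof. by case: pi_stat. Qed.

Lemma mass_zeros_below_le m :
  \sum_(x <- box n m.+1) pi x * ((nzeros x != 0%N) && (vnorm x < m)%N)%:R
  <= (n - 1)%:R / n%:R * \sum_(x <- box n m.+1) pi x * (m <= vnorm x)%N%:R.
Proof.
pose f y := (minn (vnorm y) m)%:R - m%:R : R.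
have f_out y : ~~ in_box m y -> f y = 0.
  move=> /not_in_boxP[i yi]; rewrite /f (minn_idPr _) ?subrr //.
  exact: ltnW (leq_trans yi (coord_le_vnorm y i)).
pose h x := ((nzeros x != 0%N) && (vnorm x < m)%N)%:R
            - (n - 1)%:R / n%:R * (m <= vnorm x)%N%:R : R.
have n_gt0 : (0 < n)%N by apply: ltnW.
have n1 : n%:R = (n - 1)%:R + 1 :> R by rewrite natrB // subrK.
have q_neq0 : n%:R != 0 :> R by rewrite pnatr_eq0 -lt0n.
have drift x : h x <= step_mean n f x - f x.
  rewrite /f step_mean_subr // opprB addrA subrK.
  rewrite (step_mean_vnorm n_gt1 (leqnn n) (fun s => (minn s m)%:R)) /h.
  have [x_pos | x_zero] := eqVneq (nzeros x) 0%N; last first.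
    rewrite down_prob_eq0 // subr0 mul1r mul0r addr0 /=.
    case: ltnP => xm /=; first by rewrite (minn_idPl xm) -addn1 natrD; lra.
    by rewrite (minn_idPr (leqW xm)) subrr mulr1 sub0r oppr_le0 divr_ge0.
  rewrite /down_prob x_pos eqxx /= (vnorm_decr x_pos).
  set s := vnorm (decr x).
  have -> : n%:R - (n - 1)%:R = 1 :> R by rewrite n1 addrAC subrr add0r.
  have -> : 1 - 1 / n%:R = (n - 1)%:R / n%:R :> R by rewrite n1; field; rewrite -n1.
  case: ltnP => xm.
    have sm : (s <= m)%N by apply: leq_trans (ltnW xm); apply: leq_addr.
    rewrite (minn_idPl xm) (minn_idPl sm) /= mulr0 subr0.
    by rewrite [X in _ <= X](_ : _ = 0) // -addn1 !natrD n1; field; rewrite -n1.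
  rewrite (minn_idPr (leqW xm)) /= mulr1.
  have low_s : m%:R - (n - 1)%:R <= (minn s m)%:R :> R.
    by rewrite lerBlDr -natrD ler_nat; lia.
  rewrite -subr_ge0 (_ : _ - _ = ((minn s m)%:R - m%:R + (n - 1)%:R) / n%:R).
    by rewrite divr_ge0 //; lra.
  by rewrite [in RHS]n1 [in LHS]n1; field; rewrite -n1.
have := drift_sum_le0 n_gt1 (leqnn n) pi_stat f_out drift.
under eq_bigr do rewrite /h mulrBr mulrCA.
by rewrite sumrB -mulr_sumr subr_le0.
Qed.

Lemma stationary_zeros_eq0 y : nzeros y != 0%N -> pi y = 0.
Proof.
move=> y_zero; apply/eqP; rewrite eq_le pi_ge0 andbT.
apply/ler_addgt0Pr => e e_gt0; rewrite add0r.
have [N massN] := exists_box_mass_gt pi_stat e_gt0.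
pose m := ((n - 1) * N + vnorm y).+1.
pose below x := (vnorm x < m)%N.
have y_box : y \in box n m.+1.
  by rewrite mem_box; apply/forallP => i; have := coord_le_vnorm y i; rewrite /m; nia.
have := mass_zeros_below_le m.
set A := \sum_(x <- _) _; set B := \sum_(x <- _) _ => AB.
have yA : pi y <= A.
  apply: le_trans (ler_sum_mem (box_uniq n m.+1) y_box _) => [|x]; last first.
    by rewrite mulr_ge0.
  by rewrite y_zero /= (_ : vnorm y < m)%N ?mulr1 // ltnS leq_addl.
have massN_le : box_mass pi N <= \sum_(x <- box n m.+1) pi x * (below x)%:R.
  apply: le_trans (_ : \sum_(x <- box n N) pi x * (below x)%:R <= _).
    rewrite /box_mass big_seq [leRHS]big_seq; apply: ler_sum => x; rewrite mem_box.
    by move=> /vnorm_box xN; rewrite /below ltnS (leq_trans xN) ?leq_addr ?mulr1.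
  by apply: ler_sum_box => [|x]; [rewrite /m; nia | rewrite mulr_ge0].
have B_le : B + box_mass pi N <= 1.
  apply: le_trans (box_mass_le1 pi_stat m.+1).
  apply: le_trans (_ : B + \sum_(x <- box n m.+1) pi x * (below x)%:R <= _).
    by rewrite lerD2l.
  rewrite /B /box_mass -big_split /=; apply: ler_sum => x _.
  by rewrite /below -mulrDr; case: leqP; rewrite ?addr0 ?add0r mulr1.
have frac_le1 : (n - 1)%:R / n%:R <= 1 :> R.
  by rewrite ler_pdivrMr ?mul1r ?ler_nat ?leq_subr // ltr0n ltnW.
have B_ge0 : 0 <= B by rewrite sumr_ge0 // => x _; rewrite mulr_ge0.
apply: le_trans yA _; apply: le_trans AB _.
apply: le_trans (_ : B <= _); first by rewrite ler_piMl.
lra.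
Qed.

Lemma stationary_critical_eq0 x : pi x = 0.
Proof.
have i0 : 'I_(n - 1) by exists 0%N; rewrite subn_gt0.
move: {2}(x i0) (erefl (x i0)) => j; elim: j x => [|j IH] x xj.
  by apply: stationary_zeros_eq0; apply/eqP => /(nzeros_eq0 i0); rewrite xj.
have [x_pos | x_zero] := eqVneq (nzeros x) 0%N; last exact: stationary_zeros_eq0.
have n_le_n := leqnn n.
have xN : in_box (vnorm x) x by apply/forallP => i; apply: coord_le_vnorm.
have : pi x * down_prob R n x <= pi (decr x).
  rewrite (stationary_box n_gt1 n_le_n pi_stat (in_box_decr xN)).
  apply: le_trans (ler_wpM2l (pi_ge0 x) (down_prob_le_P R n_gt1 n_le_n x)) _.
  apply: (ler_sum_mem (F := fun z => pi z * P R n z (decr x))) (box_uniq _ _) _ _.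
    by rewrite mem_box (in_boxW (leqnSn _) xN).
  by move=> z; rewrite mulr_ge0 // P_ge0.
rewrite (IH (decr x)) ?ffunE ?xj // pmulr_lle0 ?(down_prob_gt0 R n_gt1 n_le_n) //.
by move=> pi_le0; apply/eqP; rewrite eq_le pi_le0 pi_ge0.
Qed.

End Critical.

Lemma critical_not_stationary (R : realType) (n : nat) (pi : state n -> R) :
  (1 < n)%N -> ~ stationary n pi.
Proof.
move=> n_gt1 pi_stat.
have [N] := exists_box_mass_gt pi_stat (ltr01 : (0 : R) < 1).
rewrite /box_mass big1_seq ?subrr ?ltxx // => x _.
exact: stationary_critical_eq0.
Qed.

Theorem proposition6p1 (R : realType) (n k : nat) :
  (3 <= n)%N -> (n <= k)%N ->
  stable R n k ->
  forall pi : state n -> R, stationary k pi ->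
  mean_norm pi = ((k%:R * (n - 1)%:R) / (2 * (k%:R - n%:R)) : R)%:E.
Proof.
move=> n_ge3 n_le_k _ pi pi_stat; have n_gt1 : (1 < n)%N := ltnW n_ge3.
have [n_lt_k | k_le_n] := ltnP n k; last first.
  have k_eq_n : k = n by apply/eqP; rewrite eqn_leq k_le_n.
  by subst k; case: (critical_not_stationary n_gt1 pi_stat).
have pi_ge0 x : 0 <= pi x by case: pi_stat.
have c_gt0 := drift_rate_gt0 R n_lt_k.
have -> : (k%:R * (n - 1)%:R) / (2 * (k%:R - n%:R)) = (n - 1)%:R / drift_rate R n k.
  rewrite /drift_rate; field.
  by rewrite subr_eq0 !pnatr_eq0 eqr_nat -lt0n (gtn_eqF n_lt_k) (leq_trans _ n_lt_k).
have box_le_mean N : ((box_mean pi N)%:E <= mean_norm pi)%E.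
  exact: esum_ge_sum_seq (box_uniq n N).
apply/le_anti/andP; split.
  apply: esum_le_box => [x | N]; first by rewrite mulr_ge0.
  by rewrite lee_fin ler_pdivlMr // mulrC drift_rate_box_mean_le.
rewrite leNgt; apply/negP => mean_lt.
have mean_fin : mean_norm pi \is a fin_num.
  rewrite ge0_fin_numE ?(lt_trans mean_lt) ?ltry //.
  by apply: esum_ge0 => x _; rewrite lee_fin mulr_ge0.
rewrite -(fineK mean_fin) lte_fin in mean_lt.
have [N] := exists_box_mean_gt n_gt1 n_le_k pi_stat n_lt_k mean_lt.
by rewrite -lte_fin fineK // ltNge box_le_mean.
Qed.
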